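(* Let $(D,\prec,\succ,d)$ be a commutative differential dendriform algebra of weight zero. Define, for $a,b\in D$, $$a\lhd b:=a\prec d(b)\;(=d(b)\succ a),\qquad a\rhd b:=d(b)\prec a\;(=a\succ d(b)).$$ Then $(D,\lhd,\rhd)$ is a pre-Novikov algebra. Moreover, with $a\circ b:=a\lhd b+a\rhd b=a\prec d(b)+d(b)\prec a$, the pair $(D,\circ)$ is a Novikov algebra.
   Context: $\mathbf{k}$ is a commutative unital ring. A dendriform algebra is a $\mathbf{k}$-module $D$ with bilinear operations $\prec,\succ$ such that for all $a,b,c\in D$: $(a\prec b)\prec c=a\prec(b\prec c+b\succ c)$, $(a\succ b)\prec c=a\succ(b\prec c)$, $(a\prec b+a\succ b)\succ c=a\succ(b\succ c)$. It is commutative if $a\succ b=b\prec a$ for all $a,b$. A derivation of weight $\lambda$ on it is a linear map $d$ with $d(a\prec b)=d(a)\prec b+a\prec d(b)+\lambda d(a)\prec d(b)$ and $d(a\succ b)=d(a)\succ b+a\succ d(b)+\lambda d(a)\succ d(b)$ for all $a,b$; then $(D,\prec,\succ,d)$ is a differential dendriform algebra of weight $\lambda$, called commutative if $(D,\prec,\succ)$ is commutative. A pre-Novikov algebra is a $\mathbf{k}$-module $N$ with bilinear operations $\lhd,\rhd$ such that for all $a,b,c\in N$: $(a\lhd b)\lhd c-a\lhd(b\rhd c+b\lhd c)=(b\rhd a)\lhd c-b\rhd(a\lhd c)$; $(a\rhd b+a\lhd b)\rhd c-a\rhd(b\rhd c)=(b\rhd a+b\lhd a)\rhd c-b\rhd(a\rhd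 c)$; $(a\lhd b)\lhd c=(a\lhd c)\lhd b$; $(a\rhd b+a\lhd b)\rhd c=(a\rhd c)\lhd b$. A (left) Novikov algebra is a $\mathbf{k}$-module $N$ with a bilinear operation $\circ$ such that $(a\circ b)\circ c=(a\circ c)\circ b$ and $(a\circ b)\circ c-a\circ(b\circ c)=(b\circ a)\circ c-b\circ(a\circ c)$ for all $a,b,c$. *)

From mathcomp Require Import all_boot all_algebra.
Set Implicit Arguments. Unset Strict Implicit. Unset Printing Implicit Defensive.
Import GRing.Theory.
Local Open Scope ring_scope.

Definition bilinear_op (k : comPzRingType) (D : lmodType k) (op : D -> D -> D) : Prop :=
  (forall a b c : D, op (a + b) c = op a c + op b c) /\
  (forall a b c : D, op a (b + c) = op a b + op a c) /\
  (forall (r : k) (a b : D), op (r *: a) b = r *: op a b) /\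
  (forall (r : k) (a b : D), op a (r *: b) = r *: op a b).

Definition linear_map (k : comPzRingType) (D : lmodType k) (f : D -> D) : Prop :=
  (forall a b : D, f (a + b) = f a + f b) /\
  (forall (r : k) (a : D), f (r *: a) = r *: f a).

Definition dendriform (k : comPzRingType) (D : lmodType k) (pr su : D -> D -> D) : Prop :=
  bilinear_op pr /\ bilinear_op su /\
  (forall a b c : D, pr (pr a b) c = pr a (pr b c + su b c)) /\
  (forall a b c : D, pr (su a b) c = su a (pr b c)) /\
  (forall a b c : D, su (pr a b + su a b) c = su a (su b c)).

Definition commutative_dendriform (k : comPzRingType) (D : lmodType k) (pr su : D -> D -> D) : Prop :=
  dendriform pr su /\ (forall a b : D, su a b = pr b a).

Definition dend_derivation (k : comPzRingType) (D : lmodType k) (lambda : k)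
    (pr su : D -> D -> D) (d : D -> D) : Prop :=
  linear_map d /\
  (forall a b : D, d (pr a b) = pr (d a) b + pr a (d b) + lambda *: pr (d a) (d b)) /\
  (forall a b : D, d (su a b) = su (d a) b + su a (d b) + lambda *: su (d a) (d b)).

Definition pre_novikov (k : comPzRingType) (D : lmodType k) (lt rt : D -> D -> D) : Prop :=
  bilinear_op lt /\ bilinear_op rt /\
  (forall a b c : D, lt (lt a b) c - lt a (rt b c + lt b c) = lt (rt b a) c - rt b (lt a c)) /\
  (forall a b c : D, rt (rt a b + lt a b) c - rt a (rt b c)
                     = rt (rt b a + lt b a) c - rt b (rt a c)) /\
  (forall a b c : D, lt (lt a b) c = lt (lt a c) b) /\
  (forall a b c : D, rt (rt a b + lt a b) c = lt (rt a c) b).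

Definition novikov (k : comPzRingType) (D : lmodType k) (o : D -> D -> D) : Prop :=
  bilinear_op o /\
  (forall a b c : D, o (o a b) c = o (o a c) b) /\
  (forall a b c : D, o (o a b) c - o a (o b c) = o (o b a) c - o b (o a c)).

From mathcomp Require Import all_boot all_algebra.
Import GRing.Theory.
Set Implicit Arguments. Unset Strict Implicit. Unset Printing Implicit Defensive.
Local Open Scope ring_scope.

(* Writing [x y] for [x \prec y], commutativity turns the dendriform axioms
   into right-commutativity [(x y) z = (x z) y] and
   [(x y) z = x (y z + z y)], and a weight-zero derivation is Leibniz for
   [\prec].  Expanding the four pre-Novikov identities with these rules, both
   sides of each reduce to the same monomial (e.g. [-(a b) d(d c)] for the
   first one).  The Novikov statement holds for any pre-Novikov algebra: the
   right-commutativity of [\lhd + \rhd] is the last two axioms, and its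
   associator splits into three differences, which the first two axioms make
   symmetric in the first two arguments. *)

Section BilinearOps.
Variables (k : comPzRingType) (D : lmodType k).

Lemma bilinear_op_flip (op : D -> D -> D) :
  bilinear_op op -> bilinear_op (fun a b => op b a).
Proof. by case=> [opDl [opDr [opZl opZr]]]; do !split. Qed.

Lemma bilinear_op_compr (op : D -> D -> D) (f : D -> D) :
  bilinear_op op -> linear_map f -> bilinear_op (fun a b => op a (f b)).
Proof.
case=> [opDl [opDr [opZl opZr]]] [fD fZ]; do !split=> //.
- by move=> a b c; rewrite fD opDr.
- by move=> r a b; rewrite fZ opZr.
Qed.

Lemma bilinear_opD (op1 op2 : D -> D -> D) :
  bilinear_op op1 -> bilinear_op op2 -> bilinear_op (fun a b => op1 a b + op2 a b).
Proof.
case=> [Dl1 [Dr1 [Zl1 Zr1]]] [Dl2 [Dr2 [Zl2 Zr2]]]; do !split.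
- by move=> a b c; rewrite Dl1 Dl2 addrACA.
- by move=> a b c; rewrite Dr1 Dr2 addrACA.
- by move=> r a b; rewrite Zl1 Zl2 scalerDr.
- by move=> r a b; rewrite Zr1 Zr2 scalerDr.
Qed.

End BilinearOps.

Lemma novikov_pre_novikov (k : comPzRingType) (D : lmodType k)
    (lt rt : D -> D -> D) :
  pre_novikov lt rt -> novikov (fun a b => lt a b + rt a b).
Proof.
case=> lt_bilin [rt_bilin [lt_assoc [rt_assoc [lt_rcomm rt_lt]]]].
have [ltDl [ltDr _]] := lt_bilin; have [rtDl [rtDr _]] := rt_bilin.
split; first exact: bilinear_opD.
split=> [a b c | a b c] /=.
  have expand x y z : lt (lt x y + rt x y) z + rt (lt x y + rt x y) z
      = lt (lt x y) z + (lt (rt x y) z + lt (rt x z) y).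
    by rewrite ltDl [lt x y + _]addrC rt_lt -addrA.
  by rewrite !expand lt_rcomm [lt (rt a b) c + _]addrC.
pose T x y := lt (rt x y) c - rt x (lt y c).
have split_assoc x y :
    lt (lt x y + rt x y) c + rt (lt x y + rt x y) c
      - (lt x (lt y c + rt y c) + rt x (lt y c + rt y c))
    = (lt (lt x y) c - lt x (rt y c + lt y c))
      + (rt (rt x y + lt x y) c - rt x (rt y c)) + T x y.
  rewrite [lt x y + _]addrC [lt y c + _]addrC ltDl rtDr addrA.
  rewrite [lt (rt x y) c + _]addrC [X in X - _]addrAC opprD addrACA opprD.
  by rewrite (addrACA (lt (lt x y) c)).
by rewrite !split_assoc !lt_assoc rt_assoc [LHS]addrC [RHS]addrAC addrA.
Qed.

Section CommutativeDifferentialDendriform.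
Variables (k : comPzRingType) (D : lmodType k) (pr su : D -> D -> D) (d : D -> D).
Hypotheses (dend : commutative_dendriform pr su) (der : dend_derivation 0 pr su d).

Lemma comm_dendriform_rcomm x y z : pr (pr x y) z = pr (pr x z) y.
Proof.
have [[_ [_ [_ [prsuA _]]]] suC] := dend.
by have := prsuA y x z; rewrite !suC.
Qed.

Lemma comm_dendriform_assoc x y z : pr (pr x y) z = pr x (pr y z + pr z y).
Proof. by have [[_ [_ [prA _]]] suC] := dend; rewrite prA suC. Qed.

Lemma derivation0_leibniz x y : d (pr x y) = pr (d x) y + pr x (d y).
Proof. by have [_ [dpr _]] := der; rewrite dpr scale0r addr0. Qed.

Local Notation lt := (fun a b => pr a (d b)).
Local Notation rt := (fun a b => pr (d b) a).

Let prDl := dend.1.1.1.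
Let prDr := dend.1.1.2.1.
Let dD := der.1.1.

Lemma comm_diff_dendriform_lt_assoc a b c :
  lt (lt a b) c - lt a (rt b c + lt b c) = lt (rt b a) c - rt b (lt a c).
Proof.
have lhs : lt (lt a b) c - lt a (rt b c + lt b c) = - pr (pr a b) (d (d c)).
  rewrite /= comm_dendriform_assoc dD !derivation0_leibniz.
  rewrite [pr (d (d c)) b + _]addrC addrACA (prDr a (_ + _)) opprD addrA.
  by rewrite [pr (d c) _ + _]addrC subrr sub0r addrC -comm_dendriform_assoc.
rewrite lhs /= derivation0_leibniz prDl opprD addrA.
by rewrite (comm_dendriform_rcomm (d a) b) subrr sub0r comm_dendriform_rcomm.
Qed.

Lemma comm_diff_dendriform_rt_assoc a b c :
  rt (rt a b + lt a b) c - rt a (rt b c) = - pr (pr (d (d c)) a) b.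
Proof.
rewrite /= -comm_dendriform_assoc derivation0_leibniz prDl.
by rewrite opprD addrCA subrr addr0 comm_dendriform_rcomm.
Qed.

Lemma comm_diff_dendriform_pre_novikov : pre_novikov lt rt.
Proof.
have [prB _] := dend.1; have [dL _] := der.
split; first exact: bilinear_op_compr.
split; first exact: (bilinear_op_compr (bilinear_op_flip prB) dL).
split; first exact: comm_diff_dendriform_lt_assoc.
split.
  move=> a b c; rewrite !comm_diff_dendriform_rt_assoc.
  by rewrite comm_dendriform_rcomm.
split=> a b c /=; first exact: comm_dendriform_rcomm.
by rewrite addrC -comm_dendriform_assoc.
Qed.

End CommutativeDifferentialDendriform.

Theorem proposition3p15 (k : comPzRingType) (D : lmodType k)
    (pr su : D -> D -> D) (d : D -> D) :
  commutative_dendriform pr su ->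
  dend_derivation 0 pr su d ->
  pre_novikov (fun a b => pr a (d b)) (fun a b => pr (d b) a) /\
  novikov (fun a b => pr a (d b) + pr (d b) a).
Proof.
move=> dend der.
have preN := comm_diff_dendriform_pre_novikov dend der.
by split; last exact: novikov_pre_novikov.
Qed.
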